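(* There exists an infinite, three-generated, $2$-modular lattice $K$ with zero such that $K\otimes K$ is a capped tensor product.
   Context: For a lattice $L$, define $\langle x,y,z\rangle^{(1)}=\langle x\vee(y\wedge z),y\vee(x\wedge z),z\vee(x\wedge y)\rangle$ on $L^3$, $u^{(0)}=u$, $u^{(k+1)}=(u^{(k)})^{(1)}$; $L$ is $2$-modular if $u^{(3)}=u^{(2)}$ for all $u\in L^3$. Tensor products: for join-semilattices with zero $A,B$, a bi-ideal of $A\times B$ is a down-set containing $(A\times\{0\})\cup(\{0\}\times B)$ and closed under lateral joins (joins of pairs $\langle a_0,b_0\rangle,\langle a_1,b_1\rangle$ with $a_0=a_1$ or $b_0=b_1$); $A\otimes B$ is the join-semilattice of compact elements of the algebraic lattice of all bi-ideals of $A\times B$. A bi-ideal $I$ is capped if there is a finite $\Gamma\subseteq A\times B$ such that $I$ is the down-set generated by $\Gamma\cup(A\times\{0\})\cup(\{0\}\times B)$; $A\otimes B$ is a capped tensor product if all its elements are capped. *)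

From mathcomp Require Import all_boot all_order.
From Stdlib Require Import List.
Set Implicit Arguments. Unset Strict Implicit. Unset Printing Implicit Defensive.
Import Order.Theory.
Local Open Scope order_scope.

Inductive gen3 {d : Order.disp_t} {K : latticeType d} (a b c : K) : K -> Prop :=
  | gen3_a : gen3 a b c a
  | gen3_b : gen3 a b c b
  | gen3_c : gen3 a b c c
  | gen3_meet x y : gen3 a b c x -> gen3 a b c y -> gen3 a b c (x `&` y)
  | gen3_join x y : gen3 a b c x -> gen3 a b c y -> gen3 a b c (x `|` y).

Definition three_generated {d : Order.disp_t} (K : latticeType d) : Prop :=
  exists a b c : K, forall x : K, gen3 a b c x.

Definition infinite_type (T : Type) : Prop :=
  ~ exists s : list T, forall x : T, In x s.

Definition step1 {d : Order.disp_t} {K : latticeType d} (u : K * K * K) : K * K * K :=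
  let '(x, y, z) := u in
  (x `|` (y `&` z), y `|` (x `&` z), z `|` (x `&` y)).

Definition two_modular {d : Order.disp_t} (K : latticeType d) : Prop :=
  forall u : K * K * K, iter 3 step1 u = iter 2 step1 u.

Section Tensor.
Context {dA dB : Order.disp_t} {A : bJoinSemilatticeType dA}
        {B : bJoinSemilatticeType dB}.

Definition pset := A * B -> Prop.

Definition is_biideal (I : pset) : Prop :=
  [/\ (forall p q : A * B, I q -> p.1 <= q.1 -> p.2 <= q.2 -> I p),
      (forall a : A, I (a, \bot)),
      (forall b : B, I (\bot, b)),
      (forall (a : A) (b0 b1 : B), I (a, b0) -> I (a, b1) -> I (a, b0 `|` b1))
    & (forall (a0 a1 : A) (b : B), I (a0, b) -> I (a1, b) -> I (a0 `|` a1, b))].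

(* bi-ideal generated by X: intersection of all bi-ideals containing X;
   this is the join in the (algebraic) lattice of bi-ideals *)
Definition biideal_closure (X : pset) : pset :=
  fun p => forall I : pset, is_biideal I -> (forall q, X q -> I q) -> I p.

Definition psubset (X Y : pset) : Prop := forall p, X p -> Y p.

Definition compact_biideal (I : pset) : Prop :=
  is_biideal I /\
  forall (T : Type) (F : T -> pset),
    (forall t, is_biideal (F t)) ->
    psubset I (biideal_closure (fun p => exists t, F t p)) ->
    exists s : list T,
      psubset I (biideal_closure (fun p => exists t, In t s /\ F t p)).

Definition capped (I : pset) : Prop :=
  exists Gamma : list (A * B),
    forall p : A * B,
      I p <-> exists q : A * B,
        (In q Gamma \/ q.2 = \bot \/ q.1 = \bot) /\ p.1 <= q.1 /\ p.2 <= q.2.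

End Tensor.

(* A (x) B is a capped tensor product: all its elements (the compact
   bi-ideals of A x B) are capped *)
Definition capped_tensor {dA dB : Order.disp_t}
  (A : bJoinSemilatticeType dA) (B : bJoinSemilatticeType dB) : Prop :=
  forall I : @pset dA dB A B, compact_biideal I -> capped I.

(* K consists of 0, an atom b, two descending chains a_0 > a_1 > ... and
   c_0 > c_1 > ..., and above b the descending chain
   b v a_0 > b v c_0 > b v a_1 > b v c_1 > ..., where a_n <= b v c_m iff m < n.
   It is generated by a_0, b, c_0, since a_(n+1) = a_0 ^ (b v c_n) and
   c_(n+1) = c_0 ^ (b v a_(n+1)).
   The map u |-> u^(1) commutes with permutations of the triple, so 2-modularity
   reduces to a finite case analysis on the sorted shapes of the three entries.
   K is a union of six descending omega-chains, so Dickson's lemma, applied to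
   each pair of chains, shows that every down-set of K x K is generated by
   finitely many elements; in particular every bi-ideal of K x K is capped. *)

From Stdlib Require Import Classical Wf_nat.
From Stdlib Require List.
From HB Require Import structures.
From mathcomp Require Import all_boot all_order.
From mathcomp Require Import zify.
Set Implicit Arguments. Unset Strict Implicit. Unset Printing Implicit Defensive.
Import Order.Theory.

Lemma InP (T : eqType) (x : T) (s : seq T) : reflect (List.In x s) (x \in s).
Proof.
apply: (iffP idP); elim: s => //= y s IH; rewrite in_cons.
  by case/orP => [/eqP ->|/IH]; [left | right].
by case=> [->|/IH ->]; rewrite ?eqxx ?orbT.
Qed.

Lemma infinite_type_of_inj (T : eqType) (f : nat -> T) :
  injective f -> infinite_type T.
Proof.
move=> f_inj [s sT].
have sub : {subset map f (iota 0 (size s).+1) <= s} by move=> x _; apply/InP.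
have := uniq_leq_size _ sub.
by rewrite map_inj_uniq // iota_uniq size_map size_iota ltnn => /(_ isT).
Qed.

Lemma ex_least_nat (P : nat -> Prop) :
  (exists n, P n) -> exists n, P n /\ forall k, P k -> n <= k.
Proof.
move=> exP; have [n [[Pn n_min] _]] :=
  dec_inh_nat_subset_has_unique_least_element P (fun n => classic (P n)) exP.
by exists n; split=> // k /n_min /ssrnat.leP.
Qed.

Section Dickson.
Variable U : nat -> nat -> Prop.

Definition dominates (s : seq (nat * nat)) (V : nat -> nat -> Prop) :=
  {in s, forall q, U q.1 q.2} /\
  forall m n, V m n -> exists2 q, q \in s & (q.1 <= m) && (q.2 <= n).

Lemma dickson_columns k : exists s, dominates s (fun m n => m < k /\ U m n).
Proof.
elim: k => [|k [s [sU s_dom]]]; first by exists [::]; split=> // m n [].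
have [/ex_least_nat[n0 [Ukn0 n0_min]]|noUk] := classic (exists n, U k n).
  exists ((k, n0) :: s); split=> [q|m n [lt_m_k1 Umn]].
    by rewrite in_cons => /predU1P[-> //|/sU].
  case: (ltnP m k) => [lt_mk|le_km].
    have [q sq le_q] := s_dom m n (conj lt_mk Umn).
    by exists q; rewrite // in_cons sq orbT.
  have eq_mk : m = k by lia.
  rewrite eq_mk in Umn *.
  by exists (k, n0); rewrite ?mem_head //= leqnn n0_min.
exists s; split=> // m n [lt_m_k1 Umn].
case: (ltnP m k) => [lt_mk|le_km]; first exact: s_dom.
by case: noUk; exists n; have <- : m = k by lia.
Qed.

End Dickson.

(* Points above some (m0, n0) in U are dominated by it; the others lie in one of
   the finitely many columns m < m0 or rows n < n0. *)
Lemma dickson (U : nat -> nat -> Prop) : exists s, dominates U s U.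
Proof.
have [[m0 [n0 Um0n0]]|noU] := classic (exists m n, U m n); last first.
  by exists [::]; split=> // m n Umn; case: noU; exists m, n.
have [sc [scU sc_dom]] := dickson_columns U m0.
have [sr [srU sr_dom]] := dickson_columns (fun n m => U m n) n0.
exists ((m0, n0) :: sc ++ [seq (q.2, q.1) | q <- sr]); split.
  move=> q; rewrite in_cons mem_cat => /or3P[/eqP-> // | /scU // |].
  by case/mapP=> q' /srU Uq' ->.
move=> m n Umn; case: (ltnP m m0) => [lt_m_m0|le_m0_m].
  have [q sq le_q] := sc_dom m n (conj lt_m_m0 Umn).
  by exists q; rewrite // in_cons mem_cat sq orbT.
case: (ltnP n n0) => [lt_n_n0|le_n0_n].
  have [q sq /andP[le1 le2]] := sr_dom n m (conj lt_n_n0 Umn).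
  exists (q.2, q.1); rewrite ?le1 ?le2 //.
  by rewrite in_cons mem_cat (map_f (fun q => (q.2, q.1)) sq) !orbT.
by exists (m0, n0); rewrite ?mem_head //= le_m0_m le_n0_n.
Qed.

Section DescendingCovers.
Local Open Scope order_scope.

Definition descending_cover d (T : porderType d) (I : finType) (f : I -> nat -> T) :=
  (forall i, {homo f i : m n / (m <= n)%N >-> n <= m}) /\
  forall x, exists i n, x = f i n.

Lemma downset_finitely_generated d1 d2 (T1 : porderType d1) (T2 : porderType d2)
    (I1 I2 : finType) (f1 : I1 -> nat -> T1) (f2 : I2 -> nat -> T2)
    (D : T1 * T2 -> Prop) :
  descending_cover f1 -> descending_cover f2 ->
  (forall p q, D q -> p.1 <= q.1 -> p.2 <= q.2 -> D p) ->
  exists s : seq (T1 * T2),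
    forall p, D p <-> exists2 q : T1 * T2, q \in s & (p.1 <= q.1) && (p.2 <= q.2).
Proof.
move=> [f1_anti f1_onto] [f2_anti f2_onto] D_down.
pose U (ij : I1 * I2) m n := D (f1 ij.1 m, f2 ij.2 n).
have [gen gen_dom] := fin_all_exists (fun ij => dickson (U ij)).
exists [seq (f1 ij.1 q.1, f2 ij.2 q.2) | ij <- enum {: I1 * I2}, q <- gen ij].
move=> [x y]; split=> [Dxy|[_ /allpairsPdep[ij [q [_ gq ->]]] /andP[le1 le2]]].
  have [i [m def_x]] := f1_onto x; have [j [n def_y]] := f2_onto y.
  rewrite def_x def_y in Dxy *.
  have [q gq /andP[qm qn]] := (gen_dom (i, j)).2 m n Dxy.
  exists (f1 i q.1, f2 j q.2); last by rewrite /= !(f1_anti, f2_anti).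
  by apply/allpairsPdep; exists (i, j), q; rewrite mem_enum.
exact: D_down ((gen_dom ij).1 q gq) le1 le2.
Qed.

Lemma capped_tensor_of_descending_covers dA dB
    (A : bJoinSemilatticeType dA) (B : bJoinSemilatticeType dB)
    (IA IB : finType) (fA : IA -> nat -> A) (fB : IB -> nat -> B) :
  descending_cover fA -> descending_cover fB -> capped_tensor A B.
Proof.
move=> coverA coverB I [[I_down I_A0 I_0B _ _] _].
have [s sI] := downset_finitely_generated coverA coverB I_down.
exists s => p; rewrite sI; split=> [[q sq /andP[le1 le2]]|].
  by exists q; split; [left; apply/InP | split].
case=> q [[/InP sq | [q2_0 | q1_0]] [le1 le2]].
- by exists q; rewrite ?le1.
- by apply/sI/(I_down p (q.1, \bot) (I_A0 _)); rewrite -?q2_0.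
- by apply/sI/(I_down p (\bot, q.2) (I_0B _)); rewrite -?q1_0.
Qed.

End DescendingCovers.

Section Triples.
Variable T : Type.
Implicit Types (u : T * T * T) (t : T -> nat).

Definition swap12 u : T * T * T := let '(x, y, z) := u in (y, x, z).
Definition rot3 u : T * T * T := let '(x, y, z) := u in (y, z, x).

Lemma triple_sorted_ind t (P : T * T * T -> Prop) :
    (forall u, P u -> P (swap12 u)) -> (forall u, P u -> P (rot3 u)) ->
    (forall x y z, t x <= t y <= t z -> P (x, y, z)) ->
  forall u, P u.
Proof.
move=> Pswap Prot Psorted [[x y] z].
have Pxyz x' y' z' : t x' <= t y' -> t y' <= t z' -> P (x', y', z').
  by move=> le1 le2; apply: Psorted; rewrite le1.
have [xy|yx] := leqP (t x) (t y); have [yz|zy] := leqP (t y) (t z);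
  have [xz|zx] := leqP (t x) (t z).
- exact: Pxyz.
- exact: Pxyz.
- exact: (Prot (z, x, y) (Pswap (x, z, y) (Pxyz _ _ _ xz (ltnW zy)))).
- exact: (Prot (z, x, y) (Pxyz _ _ _ (ltnW zx) xy)).
- exact: (Pswap (y, x, z) (Pxyz _ _ _ (ltnW yx) xz)).
- exact: (Prot _ (Prot (y, z, x) (Pxyz _ _ _ yz (ltnW zx)))).
- by exfalso; lia.
- exact: (Prot _ (Prot _ (Pswap (z, y, x) (Pxyz _ _ _ (ltnW zy) (ltnW yx))))).
Qed.

End Triples.

Section Step1.
Variables (d : Order.disp_t) (L : latticeType d).
Implicit Types (u : L * L * L).
Local Open Scope order_scope.

Definition balanced u : bool :=
  let '(x, y, z) := u in [&& y `&` z <= x, x `&` z <= y & x `&` y <= z].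

Lemma step1_id_balanced u : balanced u -> step1 u = u.
Proof.
case: u => [[x y] z] /and3P[yz_x xz_y xy_z] /=.
by rewrite (join_l yz_x) (join_l xz_y) (join_l xy_z).
Qed.

Lemma step1_swap12 u : step1 (swap12 u) = swap12 (step1 u).
Proof. by case: u => [[x y] z] /=; rewrite (meetC y x). Qed.

Lemma step1_rot3 u : step1 (rot3 u) = rot3 (step1 u).
Proof. by case: u => [[x y] z] /=; rewrite (meetC z) (meetC y x). Qed.

Lemma balanced_swap12 u : balanced (swap12 u) = balanced u.
Proof. by case: u => [[x y] z] /=; rewrite (meetC y x) andbCA. Qed.

Lemma balanced_rot3 u : balanced (rot3 u) = balanced u.
Proof. by case: u => [[x y] z] /=; rewrite (meetC z x) (meetC y x); do 3!case: (_ <= _). Qed.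

Lemma two_modular_of_sorted_balanced (t : L -> nat) :
    (forall x y z, (t x <= t y <= t z)%N -> balanced (step1 (step1 (x, y, z)))) ->
  two_modular L.
Proof.
move=> sorted_bal u; change (step1 (iter 2 step1 u) = iter 2 step1 u).
apply: step1_id_balanced; move: u; apply: (triple_sorted_ind (t := t)) => // u.
  by rewrite /= !step1_swap12 balanced_swap12.
by rewrite /= !step1_rot3 balanced_rot3.
Qed.

End Step1.

(* [Kba n] and [Kbc n] stand for b v a_n and b v c_n. *)
Inductive K := K0 | Kb | Ka of nat | Kc of nat | Kba of nat | Kbc of nat.

Definition chain (i : 'I_6) (n : nat) : K :=
  match val i with 0 => K0 | 1 => Kb | 2 => Ka n | 3 => Kc n | 4 => Kba n | _ => Kbc n end.

Definition chain_pos (x : K) : 'I_6 * nat :=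
  match x with
  | K0 => (Ordinal (isT : 0 < 6), 0) | Kb => (Ordinal (isT : 1 < 6), 0)
  | Ka n => (Ordinal (isT : 2 < 6), n) | Kc n => (Ordinal (isT : 3 < 6), n)
  | Kba n => (Ordinal (isT : 4 < 6), n) | Kbc n => (Ordinal (isT : 5 < 6), n)
  end.

Lemma chain_posK : cancel chain_pos (fun p => chain p.1 p.2).
Proof. by case. Qed.

HB.instance Definition _ := Countable.copy K (can_type chain_posK).

Definition kle (x y : K) : bool :=
  match x, y with
  | K0, _ => true
  | Kb, (Kb | Kba _ | Kbc _) => true
  | Ka n, Ka m | Kc n, Kc m => m <= n
  | (Ka n | Kc n), Kba m => m <= n
  | Ka n, Kbc m => m < n
  | Kc n, Kbc m => m <= n
  | Kba n, Kba m | Kbc n, Kbc m | Kbc n, Kba m => m <= n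
  | Kba n, Kbc m => m < n
  | _, _ => false
  end.

Definition kjoin (x y : K) : K :=
  match x, y with
  | K0, z | z, K0 => z
  | Kb, Kb => Kb
  | Kb, (Ka n) | Ka n, Kb => Kba n
  | Kb, (Kc n) | Kc n, Kb => Kbc n
  | Kb, z | z, Kb => z
  | Ka n, Ka m => Ka (minn n m)
  | Kc n, Kc m => Kc (minn n m)
  | Kba n, Kba m | Ka n, Kba m | Kba n, Ka m => Kba (minn n m)
  | Kbc n, Kbc m | Kc n, Kbc m | Kbc n, Kc m => Kbc (minn n m)
  | (Ka n | Kba n), (Kc m | Kbc m) | (Kc m | Kbc m), (Ka n | Kba n) =>
      if n <= m then Kba n else Kbc m
  end.

Definition kmeet (x y : K) : K :=
  match x, y with
  | K0, _ | _, K0 => K0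
  | Kb, (Ka _ | Kc _) | (Ka _ | Kc _), Kb => K0
  | Kb, _ | _, Kb => Kb
  | Ka _, Kc _ | Kc _, Ka _ => K0
  | Ka n, Ka m | Ka n, Kba m | Kba m, Ka n => Ka (maxn n m)
  | Ka n, Kbc m | Kbc m, Ka n => Ka (maxn n m.+1)
  | Kc n, Kc m | Kc n, Kba m | Kba m, Kc n | Kc n, Kbc m | Kbc m, Kc n => Kc (maxn n m)
  | Kba n, Kba m => Kba (maxn n m)
  | Kbc n, Kbc m => Kbc (maxn n m)
  | Kba n, Kbc m | Kbc m, Kba n => if m < n then Kba n else Kbc m
  end.

(* Splitting the innermost conditional first keeps the terms small and lets
   [lia] prune the impossible branches early. *)
Ltac case_innermost_if :=
  match goal with |- context [if ?b then _ else _] =>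
    lazymatch b with
    | context [if _ then _ else _] => fail
    | _ => let E := fresh "E" in case E: b
    end
  end.

Ltac normalize_K := cbn [kle kmeet kjoin andb]; unfold minn, maxn.

Ltac decide_K :=
  repeat (normalize_K; case_innermost_if; try (exfalso; lia)); normalize_K; lia.

Lemma kle_refl : reflexive kle. Proof. by case => //= n. Qed.

Lemma kle_anti : antisymmetric kle.
Proof.
by case=> [||n|n|n|n] [||m|m|m|m] //= /andP[? ?]; first [congr (_ _) | exfalso]; lia.
Qed.

Lemma kle_trans : transitive kle.
Proof. by case=> [||n|n|n|n] [||m|m|m|m] [||k|k|k|k] //=; lia. Qed.

Lemma kle_meet x y z : kle x (kmeet y z) = kle x y && kle x z.
Proof. by case: x y z => [||n|n|n|n] [||m|m|m|m] [||k|k|k|k]; decide_K. Qed.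

Lemma kle_join x y z : kle (kjoin x y) z = kle x z && kle y z.
Proof. by case: x y z => [||n|n|n|n] [||m|m|m|m] [||k|k|k|k]; decide_K. Qed.

Fact K_display : Order.disp_t. Proof. exact: Order.Disp tt tt. Qed.
HB.instance Definition _ := Order.Le_isPOrder.Build K_display K kle_refl kle_anti kle_trans.
HB.instance Definition _ :=
  Order.POrder_MeetJoin_isLattice.Build K_display K kle_meet kle_join.
Lemma kle0x x : kle K0 x. Proof. by []. Qed.
HB.instance Definition _ := Order.hasBottom.Build K_display K kle0x.

Local Open Scope order_scope.

Lemma K_leE (x y : K) : (x <= y) = kle x y. Proof. by []. Qed.
Lemma K_meetE (x y : K) : x `&` y = kmeet x y. Proof. by []. Qed.
Lemma K_joinE (x y : K) : x `|` y = kjoin x y. Proof. by []. Qed.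

Lemma K_two_modular : two_modular K.
Proof.
apply: (two_modular_of_sorted_balanced (t := fun x => val (chain_pos x).1)).
by case=> [||n|n|n|n] [||m|m|m|m] [||k|k|k|k] //= _;
  rewrite !(K_leE, K_meetE, K_joinE); abstract decide_K.
Qed.

Lemma K_infinite : infinite_type K.
Proof. by apply: (infinite_type_of_inj (f := Ka)) => m n []. Qed.

Lemma K_generated x : gen3 (Ka 0) Kb (Kc 0) x.
Proof.
have gen_b := gen3_b (Ka 0) Kb (Kc 0).
have gen_chains n : gen3 (Ka 0) Kb (Kc 0) (Ka n) /\ gen3 (Ka 0) Kb (Kc 0) (Kc n).
  elim: n => [|n [_ gen_cn]]; first by split; constructor.
  have gen_an1 : gen3 (Ka 0) Kb (Kc 0) (Ka n.+1).
    have -> : Ka n.+1 = Ka 0 `&` (Kb `|` Kc n) by [].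
    exact/gen3_meet/gen3_join/gen_cn/gen_b/gen3_a.
  split=> //; have -> : Kc n.+1 = Kc 0 `&` (Kb `|` Ka n.+1) by [].
  exact/gen3_meet/gen3_join/gen_an1/gen_b/gen3_c.
case: x => [||n|n|n|n]; try by case: (gen_chains n).
- by have -> : K0 = Ka 0 `&` Kb by []; exact/gen3_meet/gen_b/gen3_a.
- by [].
- by have -> : Kba n = Kb `|` Ka n by []; exact/gen3_join/(gen_chains n).1/gen_b.
- by have -> : Kbc n = Kb `|` Kc n by []; exact/gen3_join/(gen_chains n).2/gen_b.
Qed.

Lemma K_descending_cover : descending_cover chain.
Proof.
split=> [i m n le_mn | x]; last by exists (chain_pos x).1, (chain_pos x).2; rewrite chain_posK.
by case: i => [[|[|[|[|[|i]]]]] ?]; rewrite K_leE /= ?le_mn.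
Qed.

Theorem theorem5p14 :
  exists (d : Order.disp_t) (K : bLatticeType d),
    [/\ infinite_type K, three_generated K, two_modular K
      & capped_tensor K K].
Proof.
exists K_display, K; split.
- exact: K_infinite.
- by exists (Ka 0), Kb, (Kc 0); exact: K_generated.
- exact: K_two_modular.
- exact: capped_tensor_of_descending_covers K_descending_cover K_descending_cover.
Qed.
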